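(* Let $T$ be a simplex in $\mathbb{E}^3$ all four of whose facets have the same area. Then the axis of any circumscribing cylinder of $T$ of minimum radius is perpendicular to two opposite edges of $T$ (i.e. to two edges having no vertex in common).
   Context: A cylinder in $\mathbb{E}^3$ is the set of points at a fixed distance $\rho>0$ (its radius) from a line (its axis). A cylinder is circumscribing for a simplex if all vertices of the simplex lie on it. *)

From mathcomp Require Import all_boot all_order all_algebra.
From mathcomp Require Import reals.
Set Implicit Arguments. Unset Strict Implicit. Unset Printing Implicit Defensive.
Import Order.TTheory GRing.Theory Num.Theory.
Local Open Scope ring_scope.

Notation pt R := 'rV[R]_3.

Definition dot {R : realType} (u v : pt R) : R := \sum_(i < 3) u 0 i * v 0 i.
Definition enorm {R : realType} (u : pt R) : R := Num.sqrt (dot u u).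

Definition cross {R : realType} (u v : pt R) : pt R :=
  \row_(i < 3)
    (if i == 0 :> nat then u 0 1 * v 0 2 - u 0 2 * v 0 1
     else if i == 1 :> nat then u 0 2 * v 0 0 - u 0 0 * v 0 2
     else u 0 0 * v 0 1 - u 0 1 * v 0 0).

Definition tri_area {R : realType} (a b c : pt R) : R :=
  enorm (cross (b - a) (c - a)) / 2.

Definition is_simplex {R : realType} (a b c d : pt R) : Prop :=
  \det (col_mx (b - a) (col_mx (c - a) (d - a))) != 0.

Definition equal_facet_areas {R : realType} (a b c d : pt R) : Prop :=
  [/\ tri_area b c d = tri_area a c d,
      tri_area a c d = tri_area a b d &
      tri_area a b d = tri_area a b c].

(* Euclidean distance from x to the line {p + t u | t in R}, u <> 0
   (closed form of inf_t |x - (p + t u)|). *)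
Definition dist_line {R : realType} (p u x : pt R) : R :=
  Num.sqrt (dot (x - p) (x - p) - (dot (x - p) u) ^+ 2 / dot u u).

Definition circumscribing {R : realType} (a b c d p u : pt R) (rho : R) : Prop :=
  [/\ u != 0, 0 < rho &
      [/\ dist_line p u a = rho, dist_line p u b = rho,
          dist_line p u c = rho & dist_line p u d = rho]].

Definition min_circumscribing {R : realType} (a b c d p u : pt R) (rho : R) : Prop :=
  circumscribing a b c d p u rho /\
  forall (p' u' : pt R) (rho' : R), circumscribing a b c d p' u' rho' -> rho <= rho'.

Definition perp_two_opposite_edges {R : realType} (a b c d u : pt R) : Prop :=
  [\/ dot u (b - a) = 0 /\ dot u (d - c) = 0,
      dot u (c - a) = 0 /\ dot u (d - b) = 0 |
      dot u (d - a) = 0 /\ dot u (c - b) = 0].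

From mathcomp Require Import all_boot all_order all_algebra.
From mathcomp Require Import reals ring lra.

Set Implicit Arguments.
Unset Strict Implicit.
Unset Printing Implicit Defensive.

Import Order.TTheory GRing.Theory Num.Theory.
Local Open Scope ring_scope.

(* Equal facet areas force opposite edges to be equal: the four facet normals have the
   same length and sum to zero, and the length of an edge is read off the cross product
   of the normals of the two facets containing it.  Hence the doubled bimedians
   [f1 = a + b - c - d], [f2 = a + c - b - d], [f3 = a + d - b - c] are pairwise
   orthogonal: the vertices are alternate corners of a box centred at the centroid [g],
   and the box axes through [g] carry circumscribing cylinders of squared radii
   [(|f_j|^2 + |f_k|^2) / 16].
   For a circumscribing cylinder with axis [p + t u] and radius [rho], summing the squared
   distances of the vertices gives
   [16 rho^2 |u|^2 = 16 |(g - p) x u|^2 + sum_i |f_i x u|^2], and expanding [u] in the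
   orthogonal frame [f_i] shows [sum_i |f_i x u|^2 >= 16 rho^2 |u|^2] when [rho] is at
   most every box-axis radius.  So a minimal cylinder has its axis through [g].  The
   vertices being equidistant from [g], the numbers [(+-t1 +- t2 +- t3) / 4]
   ([t_i = f_i . u], an even number of minus signs) then have equal squares, which forces
   two of the [t_i] to vanish: [u] is orthogonal to two opposite edges. *)

Lemma subrBB {V : zmodType} (x y z : V) : (x - z) - (y - z) = x - y.
Proof. by rewrite opprB addrA subrK. Qed.

Lemma det_mx3 (R : comNzRingType) (M : 'M[R]_3) : \det M =
  M 0 0 * (M 1 1 * M 2 2 - M 1 2 * M 2 1)
  - M 0 1 * (M 1 0 * M 2 2 - M 1 2 * M 2 0)
  + M 0 2 * (M 1 0 * M 2 1 - M 1 1 * M 2 0).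
Proof.
have -> : M = \matrix_(i, j) M (inord i) (inord j).
  by apply/matrixP => i j; rewrite mxE !inord_val.
rewrite (expand_det_row _ 0) !big_ord_recr big_ord0 /= /cofactor.
rewrite !(expand_det_row _ 0) !big_ord_recr !big_ord0 /= /cofactor !det_mx11 !mxE /=.
rewrite /bump /= -[(1 %% 3)%N]/1%N -[((1 + 1) %% 3)%N]/2%N !expr0 !expr1 /=.
ring.
Qed.

(* With [N = sum_i t_i^2 / F_i] the right-hand side is [sum_i (F_j + F_k) t_i^2 / F_i]. *)
Lemma weighted_parseval_le (R : realFieldType) (F1 F2 F3 t1 t2 t3 N r : R) :
  0 < F1 -> 0 < F2 -> 0 < F3 ->
  F1 * F2 * F3 * N = F2 * F3 * t1 ^+ 2 + F1 * F3 * t2 ^+ 2 + F1 * F2 * t3 ^+ 2 ->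
  r <= F2 + F3 -> r <= F1 + F3 -> r <= F1 + F2 ->
  r * N <= (F1 + F2 + F3) * N - (t1 ^+ 2 + t2 ^+ 2 + t3 ^+ 2).
Proof.
move=> F1_gt0 F2_gt0 F3_gt0 parseval r1 r2 r3.
rewrite -subr_ge0 -(pmulr_rge0 _ (mulr_gt0 (mulr_gt0 F1_gt0 F2_gt0) F3_gt0)).
have -> : F1 * F2 * F3 * ((F1 + F2 + F3) * N - (t1 ^+ 2 + t2 ^+ 2 + t3 ^+ 2) - r * N)
    = F2 * F3 * t1 ^+ 2 * (F2 + F3 - r) + F1 * F3 * t2 ^+ 2 * (F1 + F3 - r)
      + F1 * F2 * t3 ^+ 2 * (F1 + F2 - r).
  transitivity ((F1 + F2 + F3) * (F1 * F2 * F3 * N)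
    - F1 * F2 * F3 * (t1 ^+ 2 + t2 ^+ 2 + t3 ^+ 2) - r * (F1 * F2 * F3 * N)); first by ring.
  by rewrite parseval; ring.
have term_ge0 (u v t w : R) : 0 < u -> 0 < v -> 0 <= w -> 0 <= u * v * t ^+ 2 * w.
  by move=> u_gt0 v_gt0 w_ge0; rewrite mulr_ge0 // mulr_ge0 ?sqr_ge0 // ltW ?mulr_gt0.
by rewrite !addr_ge0 ?term_ge0 ?subr_ge0.
Qed.

Lemma two_of_three_eq0 (R : realFieldType) (x y z : R) :
  (x + y + z) ^+ 2 = (x - y - z) ^+ 2 -> (x + y + z) ^+ 2 = (y - x - z) ^+ 2 ->
  (x + y + z) ^+ 2 = (z - x - y) ^+ 2 ->
  [\/ y = 0 /\ z = 0, x = 0 /\ z = 0 | x = 0 /\ y = 0].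
Proof.
move=> ex ey ez.
have hx : x * (y + z) = 0 by nra.
have hy : y * (x + z) = 0 by nra.
have hz : z * (x + y) = 0 by nra.
have [x0 | x_neq0] := eqVneq x 0.
  move: hy; rewrite x0 add0r => /eqP; rewrite mulf_eq0 => /orP[/eqP y0 | /eqP z0].
    by apply: Or33.
  by apply: Or32.
have yz : z = - y.
  by move/eqP: hx; rewrite mulf_eq0 (negPf x_neq0) addr_eq0 => /eqP ->; rewrite opprK.
have y0 : y = 0 by rewrite yz in hz; nra.
by apply: Or31; rewrite yz y0 oppr0.
Qed.

Section Space.
Variable R : realType.
Implicit Types (a b c d p q u v w x y z : pt R).

Lemma dotE u v : dot u v = u 0 0 * v 0 0 + u 0 1 * v 0 1 + u 0 2 * v 0 2.
Proof.
rewrite /dot !big_ord_recr big_ord0 /= add0r.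
by congr (u 0 _ * v 0 _ + u 0 _ * v 0 _ + u 0 _ * v 0 _); apply/val_inj.
Qed.

Lemma row3_ext u v : u 0 0 = v 0 0 -> u 0 1 = v 0 1 -> u 0 2 = v 0 2 -> u = v.
Proof.
move=> e0 e1 e2; apply/rowP => -[[|[|[|//]]] lt_j3].
- by rewrite (_ : Ordinal lt_j3 = 0) //; apply/val_inj.
- by rewrite (_ : Ordinal lt_j3 = 1) //; apply/val_inj.
- by rewrite (_ : Ordinal lt_j3 = 2) //; apply/val_inj.
Qed.

Lemma dotC u v : dot u v = dot v u.
Proof. by rewrite !dotE; ring. Qed.

Lemma dotvv_ge0 u : 0 <= dot u u.
Proof. by rewrite dotE !addr_ge0 // sqr_ge0. Qed.

Lemma dotvv_eq0 u : (dot u u == 0) = (u == 0).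
Proof.
apply/eqP/eqP => [|->]; last by rewrite dotE !mxE; ring.
rewrite dotE => u0; apply: row3_ext; rewrite !mxE; nra.
Qed.

Lemma dotvv_gt0 u : (0 < dot u u) = (u != 0).
Proof. by rewrite lt_def dotvv_ge0 dotvv_eq0 andbT. Qed.

Lemma dotNN u : dot (- u) (- u) = dot u u.
Proof. by rewrite !dotE !mxE; ring. Qed.

Lemma dotZZ (k : R) u : dot (k *: u) (k *: u) = k ^+ 2 * dot u u.
Proof. by rewrite !dotE !mxE; ring. Qed.

Lemma col_mx3_row0 u v w j : col_mx u (col_mx v w) 0 j = u 0 j.
Proof.
have -> : 0 = lshift (1 + 1) (0 : 'I_1) :> 'I_(1 + (1 + 1)) by apply/val_inj.
by rewrite col_mxEu.
Qed.

Lemma col_mx3_row1 u v w j : col_mx u (col_mx v w) 1 j = v 0 j.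
Proof.
have -> : 1 = rshift 1 (lshift 1 (0 : 'I_1)) :> 'I_(1 + (1 + 1)) by apply/val_inj.
by rewrite col_mxEd col_mxEu.
Qed.

Lemma col_mx3_row2 u v w j : col_mx u (col_mx v w) 2 j = w 0 j.
Proof.
have -> : 2 = rshift 1 (rshift 1 (0 : 'I_1)) :> 'I_(1 + (1 + 1)) by apply/val_inj.
by rewrite !col_mxEd.
Qed.

Lemma det_col_mx3 u v w : \det (col_mx u (col_mx v w)) = dot u (cross v w).
Proof.
by rewrite det_mx3 !col_mx3_row0 !col_mx3_row1 !col_mx3_row2 dotE !mxE /=; ring.
Qed.

Lemma crossC u v : cross u v = - cross v u.
Proof. by apply: row3_ext; rewrite !mxE /=; ring. Qed.

Lemma crossBl u v w : cross (u - v) w = cross u w - cross v w.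
Proof. by apply: row3_ext; rewrite !mxE /=; ring. Qed.

Lemma dot_cross_cross u v : dot (cross u v) (cross u v) = dot u u * dot v v - dot u v ^+ 2.
Proof. by rewrite !dotE !mxE /=; ring. Qed.

Lemma cross_cross_cyclic x y z : cross (cross z x) (cross x y) = dot x (cross y z) *: x.
Proof. by apply: row3_ext; rewrite !dotE !mxE /=; ring. Qed.

Lemma cross_normal_sum x y z :
  cross (cross y z) (cross y z + cross z x + cross x y) = dot x (cross y z) *: (z - y).
Proof. by apply: row3_ext; rewrite !dotE !mxE /=; ring. Qed.

Lemma dot_cross_cyclic x y z : dot x (cross y z) = dot y (cross z x).
Proof. by rewrite !dotE !mxE /=; ring. Qed.

Lemma triple_sqr_orthogonal x y z : dot x y = 0 -> dot x z = 0 -> dot y z = 0 ->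
  dot x (cross y z) ^+ 2 = dot x x * dot y y * dot z z.
Proof.
move=> oxy oxz oyz.
have gram : dot x (cross y z) ^+ 2 = dot x x * dot y y * dot z z
    - dot x x * dot y z ^+ 2 - dot y y * dot x z ^+ 2 - dot z z * dot x y ^+ 2
    + 2 * dot x y * dot y z * dot x z.
  by rewrite !dotE !mxE /=; ring.
by rewrite gram oxy oxz oyz; ring.
Qed.

Lemma parseval_orthogonal x y z w : dot x y = 0 -> dot x z = 0 -> dot y z = 0 ->
  dot x x * dot y y * dot z z * dot w w =
  dot y y * dot z z * dot x w ^+ 2 + dot x x * dot z z * dot y w ^+ 2
  + dot x x * dot y y * dot z w ^+ 2.
Proof.
move=> oxy oxz oyz.
have gram : (dot x x * dot y y * dot z z - dot x x * dot y z ^+ 2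
      - dot y y * dot x z ^+ 2 - dot z z * dot x y ^+ 2
      + 2 * dot x y * dot y z * dot x z) * dot w w
    = (dot y y * dot z z - dot y z ^+ 2) * dot x w ^+ 2
      + (dot x x * dot z z - dot x z ^+ 2) * dot y w ^+ 2
      + (dot x x * dot y y - dot x y ^+ 2) * dot z w ^+ 2
      + 2 * (dot x z * dot y z - dot x y * dot z z) * dot x w * dot y w
      + 2 * (dot x y * dot y z - dot x z * dot y y) * dot x w * dot z w
      + 2 * (dot x y * dot x z - dot y z * dot x x) * dot y w * dot z w.
  by rewrite !dotE; ring.
by rewrite oxy oxz oyz in gram; apply: etrans (etrans _ gram) _; ring.
Qed.

Lemma enorm_eq_dot u v : enorm u = enorm v -> dot u u = dot v v.
Proof. by move=> /eqP; rewrite eqr_sqrt ?dotvv_ge0 // => /eqP. Qed.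

Lemma dist_line_eq p u x (rho : R) : u != 0 -> 0 <= rho ->
  (dist_line p u x = rho) <-> (dot (cross (x - p) u) (cross (x - p) u) = rho ^+ 2 * dot u u).
Proof.
move=> u_neq0 rho_ge0; have N_gt0 : 0 < dot u u by rewrite dotvv_gt0.
have -> : dist_line p u x = Num.sqrt (dot (cross (x - p) u) (cross (x - p) u) / dot u u).
  by rewrite /dist_line dot_cross_cross; congr Num.sqrt; field; rewrite gt_eqF.
split=> [<- | ->]; last by rewrite mulfK ?gt_eqF // sqrtr_sqr ger0_norm.
by rewrite sqr_sqrtr ?divfK ?gt_eqF // divr_ge0 ?dotvv_ge0 // ltW.
Qed.

Lemma cross_sub_axis p q u x : cross (q - p) u = 0 ->
  cross (x - q) u = cross (x - p) u.
Proof. by move=> qp_par; rewrite -(subrBB x q p) [LHS]crossBl qp_par subr0. Qed.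

Lemma tri_area_eq_dot a b c (a' b' c' : pt R) : tri_area a b c = tri_area a' b' c' ->
  dot (cross (b - a) (c - a)) (cross (b - a) (c - a))
  = dot (cross (b' - a') (c' - a')) (cross (b' - a') (c' - a')).
Proof.
by rewrite /tri_area => /(congr1 ( *%R^~ 2)); rewrite !divfK ?pnatr_eq0 // => /enorm_eq_dot.
Qed.

Lemma cross_facet_normals a b c d :
  cross (c - b) (d - b) = cross (c - a) (d - a) + cross (d - a) (b - a) + cross (b - a) (c - a).
Proof. by apply: row3_ext; rewrite !mxE /=; ring. Qed.

(* The normals [X, Y, Z] of the facets of the simplex [0, x, y, z] through [0] and the
   normal [W = X + Y + Z] of the opposite facet satisfy [Y x Z = D x] and
   [X x W = D (z - y)], with [D] the triple product; when all four have the same length,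
   [Y . Z = - X . W], so these two cross products have the same length. *)
Lemma sqr_edge_eq_of_normals x y z (s : R) : dot x (cross y z) != 0 ->
  dot (cross y z) (cross y z) = s -> dot (cross z x) (cross z x) = s ->
  dot (cross x y) (cross x y) = s ->
  dot (cross y z + cross z x + cross x y) (cross y z + cross z x + cross x y) = s ->
  dot x x = dot (z - y) (z - y).
Proof.
set X := cross y z; set Y := cross z x; set Z := cross x y; set D := dot x X.
move=> D_neq0 sX sY sZ sW.
have dotYZ : dot Y Z = - dot X (X + Y + Z).
  have -> : dot X (X + Y + Z) = dot X X + dot X Y + dot X Z by rewrite !dotE !mxE; ring.
  have : dot (X + Y + Z) (X + Y + Z)
      = dot X X + dot Y Y + dot Z Z + 2 * (dot X Y + dot X Z + dot Y Z).
    by rewrite !dotE !mxE; ring.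
  by rewrite sX sY sZ sW; lra.
have edge_x : D ^+ 2 * dot x x = s ^+ 2 - dot Y Z ^+ 2.
  by rewrite -dotZZ -cross_cross_cyclic dot_cross_cross sY sZ.
have edge_zy : D ^+ 2 * dot (z - y) (z - y) = s ^+ 2 - dot Y Z ^+ 2.
  by rewrite -dotZZ -cross_normal_sum dot_cross_cross sX sW dotYZ sqrrN.
by apply: (mulfI (expf_neq0 2 D_neq0)); rewrite edge_x edge_zy.
Qed.

Lemma equal_facet_areas_opposite_edges a b c d :
  is_simplex a b c d -> equal_facet_areas a b c d ->
  [/\ dot (b - a) (b - a) = dot (d - c) (d - c),
      dot (c - a) (c - a) = dot (d - b) (d - b) &
      dot (d - a) (d - a) = dot (c - b) (c - b)].
Proof.
rewrite /is_simplex det_col_mx3 => D_neq0 [/tri_area_eq_dot sW /tri_area_eq_dot sY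
  /tri_area_eq_dot sZ].
rewrite (cross_facet_normals a) in sW.
rewrite -(subrBB d c a) -(subrBB d b a) -(subrBB c b a).
move: D_neq0 sW sY sZ; set x := b - a; set y := c - a; set z := d - a.
rewrite [cross x z]crossC dotNN.
set s := dot (cross y z) (cross y z) => D_neq0 sW sY sZ.
have {}sZ : dot (cross x y) (cross x y) = s by rewrite -sZ.
have sY' : dot (cross z x) (cross z x) = s by rewrite sY.
have sX : dot (cross y z) (cross y z) = s by rewrite /s.
split.
- exact: (@sqr_edge_eq_of_normals x y z s D_neq0 sX sY' sZ sW).
- rewrite -[in RHS]opprB dotNN.
  apply: (@sqr_edge_eq_of_normals y z x s _ sY' sZ sX).
    by rewrite -dot_cross_cyclic.
  by rewrite addrC addrA; exact: sW.
- apply: (@sqr_edge_eq_of_normals z x y s _ sZ sX sY').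
    by rewrite -2!dot_cross_cyclic.
  by rewrite -addrA addrC; exact: sW.
Qed.

(* Twice the vector from the midpoint of [cd] to the midpoint of [ab]. *)
Definition bimedian a b c d : pt R := a + b - c - d.

Lemma bimedians_orthogonal a b c d :
  dot (b - a) (b - a) = dot (d - c) (d - c) -> dot (c - a) (c - a) = dot (d - b) (d - b) ->
  dot (d - a) (d - a) = dot (c - b) (c - b) ->
  [/\ dot (bimedian a b c d) (bimedian a c b d) = 0,
      dot (bimedian a b c d) (bimedian a d b c) = 0 &
      dot (bimedian a c b d) (bimedian a d b c) = 0].
Proof.
move=> ab_cd ac_bd ad_bc; split.
- transitivity (dot (d - a) (d - a) - dot (c - b) (c - b)); last by rewrite ad_bc subrr.
  by rewrite /bimedian !dotE !mxE; ring.
- transitivity (dot (c - a) (c - a) - dot (d - b) (d - b)); last by rewrite ac_bd subrr.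
  by rewrite /bimedian !dotE !mxE; ring.
- transitivity (dot (b - a) (b - a) - dot (d - c) (d - c)); last by rewrite ab_cd subrr.
  by rewrite /bimedian !dotE !mxE; ring.
Qed.

Section Box.
Variables a b c d : pt R.
Let f1 := bimedian a b c d.
Let f2 := bimedian a c b d.
Let f3 := bimedian a d b c.
Let g := 4^-1 *: (a + b + c + d).
Hypotheses (o12 : dot f1 f2 = 0) (o13 : dot f1 f3 = 0) (o23 : dot f2 f3 = 0).

Lemma bimedians_sqr_gt0 : is_simplex a b c d ->
  [/\ 0 < dot f1 f1, 0 < dot f2 f2 & 0 < dot f3 f3].
Proof.
rewrite /is_simplex det_col_mx3 => D_neq0.
have triple : dot f1 (cross f2 f3) = - 4 * dot (b - a) (cross (c - a) (d - a)).
  by rewrite /f1 /f2 /f3 /bimedian !dotE !mxE /=; ring.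
have : dot f1 f1 * dot f2 f2 * dot f3 f3 != 0.
  by rewrite -triple_sqr_orthogonal // triple expf_neq0 // mulf_neq0 // oppr_eq0 pnatr_eq0.
by rewrite !mulf_eq0 !negb_or -!andbA !dotvv_eq0 -!dotvv_gt0 => /and3P[].
Qed.

Lemma centroid_offsets :
  [/\ a - g = 4^-1 *: (1 *: f1 + 1 *: f2 + 1 *: f3),
      b - g = 4^-1 *: (1 *: f1 + (-1) *: f2 + (-1) *: f3),
      c - g = 4^-1 *: ((-1) *: f1 + 1 *: f2 + (-1) *: f3) &
      d - g = 4^-1 *: ((-1) *: f1 + (-1) *: f2 + 1 *: f3)].
Proof. by split; apply: row3_ext; rewrite /f1 /f2 /f3 /bimedian !mxE /=; field. Qed.

Section BoxVertex.
Variables s1 s2 s3 : R.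
Hypotheses (s1_sqr : s1 ^+ 2 = 1) (s2_sqr : s2 ^+ 2 = 1) (s3_sqr : s3 ^+ 2 = 1).
Let y := 4^-1 *: (s1 *: f1 + s2 *: f2 + s3 *: f3).

Lemma box_vertex_dot w :
  dot y w = (s1 * dot f1 w + s2 * dot f2 w + s3 * dot f3 w) / 4.
Proof. by rewrite /y !dotE !mxE; field. Qed.

Lemma box_vertex_sqr : dot y y = (dot f1 f1 + dot f2 f2 + dot f3 f3) / 16.
Proof.
rewrite box_vertex_dot !(dotC _ y) !box_vertex_dot (dotC f2 f1) (dotC f3 f1) (dotC f3 f2).
rewrite o12 o13 o23.
transitivity ((s1 ^+ 2 * dot f1 f1 + s2 ^+ 2 * dot f2 f2 + s3 ^+ 2 * dot f3 f3) / 16).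
  by field.
by rewrite s1_sqr s2_sqr s3_sqr !mul1r.
Qed.

Lemma box_vertex_cross w : dot (cross y w) (cross y w)
  = (dot f1 f1 + dot f2 f2 + dot f3 f3) / 16 * dot w w
    - ((s1 * dot f1 w + s2 * dot f2 w + s3 * dot f3 w) / 4) ^+ 2.
Proof. by rewrite dot_cross_cross box_vertex_sqr box_vertex_dot. Qed.

Lemma box_vertex_axes :
  [/\ dot (cross y f1) (cross y f1) = (dot f2 f2 + dot f3 f3) / 16 * dot f1 f1,
      dot (cross y f2) (cross y f2) = (dot f1 f1 + dot f3 f3) / 16 * dot f2 f2 &
      dot (cross y f3) (cross y f3) = (dot f1 f1 + dot f2 f2) / 16 * dot f3 f3].
Proof.
have sign_sqr (s t : R) : s ^+ 2 = 1 -> (s * t) ^+ 2 = t ^+ 2 by rewrite exprMn => ->; rewrite mul1r.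
rewrite !box_vertex_cross (dotC f2 f1) (dotC f3 f1) (dotC f3 f2) o12 o13 o23 !mulr0.
rewrite !(addr0, add0r) !expr_div_n !sign_sqr //.
by split; field.
Qed.
End BoxVertex.

Lemma circumscribing_bimedian_axes : is_simplex a b c d ->
  [/\ circumscribing a b c d g f1 (Num.sqrt ((dot f2 f2 + dot f3 f3) / 16)),
      circumscribing a b c d g f2 (Num.sqrt ((dot f1 f1 + dot f3 f3) / 16)) &
      circumscribing a b c d g f3 (Num.sqrt ((dot f1 f1 + dot f2 f2) / 16))].
Proof.
move=> /bimedians_sqr_gt0[F1_gt0 F2_gt0 F3_gt0].
have sqr1 : (1 : R) ^+ 2 = 1 by rewrite expr1n.
have sqrN1 : (-1 : R) ^+ 2 = 1 by rewrite sqrrN expr1n.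
have [ga gb gc gd] := centroid_offsets.
have [a1 a2 a3] := box_vertex_axes sqr1 sqr1 sqr1; rewrite -ga in a1 a2 a3.
have [b1 b2 b3] := box_vertex_axes sqr1 sqrN1 sqrN1; rewrite -gb in b1 b2 b3.
have [c1 c2 c3] := box_vertex_axes sqrN1 sqr1 sqrN1; rewrite -gc in c1 c2 c3.
have [d1 d2 d3] := box_vertex_axes sqrN1 sqrN1 sqr1; rewrite -gd in d1 d2 d3.
have axis (f : pt R) (r : R) : 0 < dot f f -> 0 < r ->
    [/\ dot (cross (a - g) f) (cross (a - g) f) = r * dot f f,
        dot (cross (b - g) f) (cross (b - g) f) = r * dot f f,
        dot (cross (c - g) f) (cross (c - g) f) = r * dot f f &
        dot (cross (d - g) f) (cross (d - g) f) = r * dot f f] ->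
    circumscribing a b c d g f (Num.sqrt r).
  move=> F_gt0 r_gt0 [ea eb ec ed]; have f_neq0 : f != 0 by rewrite -dotvv_gt0.
  split; rewrite ?sqrtr_gt0 //.
  by split; apply/dist_line_eq; rewrite ?sqrtr_ge0 ?sqr_sqrtr ?ltW.
by split; apply: axis; rewrite ?divr_gt0 ?addr_gt0.
Qed.

(* Centroid law for the quadratic form [y |-> |y x u|^2]; the cross terms between the
   [f_i] cancel because the vertices sit at alternate corners of the box. *)
Lemma sum_sqr_cross_vertices p u :
  dot (cross (a - p) u) (cross (a - p) u) + dot (cross (b - p) u) (cross (b - p) u)
  + dot (cross (c - p) u) (cross (c - p) u) + dot (cross (d - p) u) (cross (d - p) u)
  = 4 * dot (cross (g - p) u) (cross (g - p) u)
    + (dot (cross f1 u) (cross f1 u) + dot (cross f2 u) (cross f2 u)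
       + dot (cross f3 u) (cross f3 u)) / 4.
Proof. by rewrite !dot_cross_cross /g /f1 /f2 /f3 /bimedian !dotE !mxE /=; field. Qed.

Lemma min_circumscribing_radius_le p u rho : is_simplex a b c d ->
  min_circumscribing a b c d p u rho ->
  [/\ 16 * rho ^+ 2 <= dot f2 f2 + dot f3 f3,
      16 * rho ^+ 2 <= dot f1 f1 + dot f3 f3 &
      16 * rho ^+ 2 <= dot f1 f1 + dot f2 f2].
Proof.
move=> simplex [[_ rho_gt0 _] rho_min].
have [F1_gt0 F2_gt0 F3_gt0] := bimedians_sqr_gt0 simplex.
have radius_le (f : pt R) (s : R) : 0 <= s ->
    circumscribing a b c d g f (Num.sqrt (s / 16)) -> 16 * rho ^+ 2 <= s.
  move=> s_ge0 /rho_min rho_le.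
  suff : rho ^+ 2 <= s / 16 by lra.
  have s16_ge0 : 0 <= s / 16 by rewrite divr_ge0.
  by rewrite -(sqr_sqrtr s16_ge0) ler_sqr ?nnegrE ?sqrtr_ge0 // ltW.
have [ax1 ax2 ax3] := circumscribing_bimedian_axes simplex.
by split; [apply: radius_le ax1 | apply: radius_le ax2 | apply: radius_le ax3];
  rewrite addr_ge0 ?ltW.
Qed.

Lemma circumscribing_sqr_cross p u rho : circumscribing a b c d p u rho ->
  [/\ dot (cross (a - p) u) (cross (a - p) u) = rho ^+ 2 * dot u u,
      dot (cross (b - p) u) (cross (b - p) u) = rho ^+ 2 * dot u u,
      dot (cross (c - p) u) (cross (c - p) u) = rho ^+ 2 * dot u u &
      dot (cross (d - p) u) (cross (d - p) u) = rho ^+ 2 * dot u u].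
Proof.
move=> [u_neq0 /ltW rho_ge0 [da db dc dd]].
by split; apply/dist_line_eq.
Qed.

Lemma min_circumscribing_centroid_axis p u rho : is_simplex a b c d ->
  min_circumscribing a b c d p u rho -> cross (g - p) u = 0.
Proof.
move=> simplex min_cyl; have [r1 r2 r3] := min_circumscribing_radius_le simplex min_cyl.
have [F1_gt0 F2_gt0 F3_gt0] := bimedians_sqr_gt0 simplex.
have [ea eb ec ed] := circumscribing_sqr_cross min_cyl.1.
have := weighted_parseval_le F1_gt0 F2_gt0 F3_gt0 (parseval_orthogonal u o12 o13 o23) r1 r2 r3.
have := sum_sqr_cross_vertices p u; rewrite ea eb ec ed.
set K := dot (cross (g - p) u) _; rewrite !dot_cross_cross => sum le_sum.
have K_eq0 : K = 0 by apply/eqP; rewrite eq_le dotvv_ge0 andbT; lra.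
by apply/eqP; rewrite -dotvv_eq0 -/K K_eq0.
Qed.

Lemma perp_of_bimedians u :
  [\/ dot f2 u = 0 /\ dot f3 u = 0, dot f1 u = 0 /\ dot f3 u = 0 |
       dot f1 u = 0 /\ dot f2 u = 0] ->
  perp_two_opposite_edges a b c d u.
Proof.
rewrite /perp_two_opposite_edges.
have -> : dot u (b - a) = - (dot f2 u + dot f3 u) / 2.
  by rewrite /f2 /f3 /bimedian !dotE !mxE; field.
have -> : dot u (d - c) = (dot f3 u - dot f2 u) / 2.
  by rewrite /f2 /f3 /bimedian !dotE !mxE; field.
have -> : dot u (c - a) = - (dot f1 u + dot f3 u) / 2.
  by rewrite /f1 /f3 /bimedian !dotE !mxE; field.
have -> : dot u (d - b) = (dot f3 u - dot f1 u) / 2.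
  by rewrite /f1 /f3 /bimedian !dotE !mxE; field.
have -> : dot u (d - a) = - (dot f1 u + dot f2 u) / 2.
  by rewrite /f1 /f2 /bimedian !dotE !mxE; field.
have -> : dot u (c - b) = (dot f2 u - dot f1 u) / 2.
  by rewrite /f1 /f2 /bimedian !dotE !mxE; field.
by case=> -[-> ->]; [apply: Or31 | apply: Or32 | apply: Or33]; split; field.
Qed.

Lemma centroid_axis_perp p u rho : circumscribing a b c d p u rho ->
  cross (g - p) u = 0 -> perp_two_opposite_edges a b c d u.
Proof.
move=> cyl gp_par; have [ea eb ec ed] := circumscribing_sqr_cross cyl.
rewrite -!(cross_sub_axis _ gp_par) in ea eb ec ed.
have sqr1 : (1 : R) ^+ 2 = 1 by rewrite expr1n.
have sqrN1 : (-1 : R) ^+ 2 = 1 by rewrite sqrrN expr1n.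
have [ga gb gc gd] := centroid_offsets.
rewrite ga (box_vertex_cross sqr1 sqr1 sqr1) in ea.
rewrite gb (box_vertex_cross sqr1 sqrN1 sqrN1) in eb.
rewrite gc (box_vertex_cross sqrN1 sqr1 sqrN1) in ec.
rewrite gd (box_vertex_cross sqrN1 sqrN1 sqr1) in ed.
move: ea eb ec ed; set t1 := dot f1 u; set t2 := dot f2 u; set t3 := dot f3 u => ea eb ec ed.
have [eb' ec' ed'] : [/\ (t1 + t2 + t3) ^+ 2 = (t1 - t2 - t3) ^+ 2,
    (t1 + t2 + t3) ^+ 2 = (t2 - t1 - t3) ^+ 2 & (t1 + t2 + t3) ^+ 2 = (t3 - t1 - t2) ^+ 2].
  by split; lra.
exact: (perp_of_bimedians (two_of_three_eq0 eb' ec' ed')).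
Qed.

Lemma min_circumscribing_perp p u rho : is_simplex a b c d ->
  min_circumscribing a b c d p u rho -> perp_two_opposite_edges a b c d u.
Proof.
move=> simplex min_cyl.
exact: centroid_axis_perp min_cyl.1 (min_circumscribing_centroid_axis simplex min_cyl).
Qed.

End Box.

End Space.

Theorem mainTheorem4 (R : realType) (a b c d : 'rV[R]_3) :
  is_simplex a b c d -> equal_facet_areas a b c d ->
  forall (p u : 'rV[R]_3) (rho : R),
    min_circumscribing a b c d p u rho ->
    perp_two_opposite_edges a b c d u.
Proof.
move=> simplex equal_areas p u rho min_cyl.
have [ab_cd ac_bd ad_bc] := equal_facet_areas_opposite_edges simplex equal_areas.
have [o12 o13 o23] := bimedians_orthogonal ab_cd ac_bd ad_bc.
exact: (min_circumscribing_perp o12 o13 o23 simplex min_cyl).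
Qed.
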